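(* Let $(c_n)_{n\in\mathbb N}$ be positive integers; for each $n$ let $A_n,B_n\in M_{c_{n+1},c_n}(\mathbb Z_+)$ be proper matrices and $T_n\in M_{c_n}(\mathbb Z_+)$ a proper diagonal matrix with $A_nT_n=T_{n+1}B_n$ for all $n$. Then there is a rank-2 Bratteli diagram $\Lambda$ of infinite depth whose associated data is $c_n,A_n,B_n,T_n$ and such that for every blue edge $e$ with $r(e)\in V_{n,j}$ and $s(e)\in V_{n+1,i}$ we have $o(e)=A_n(i,j)\,|V_{n,j}|$.
   Context: A $2$-graph is a countable category $\Lambda$ with a functor $d:\Lambda\to\mathbb N^2$ satisfying unique factorisation (if $d(\lambda)=m+n$ there are unique $\mu,\nu$ with $d(\mu)=m,d(\nu)=n,\lambda=\mu\nu$). Vertices $\Lambda^0$ = degree-$0$ paths; $r,s$ range/source; $\Lambda^n=d^{-1}(n)$; $e_1=(1,0),e_2=(0,1)$; $VEW=\{\lambda\in E:r(\lambda)\in V,s(\lambda)\in W\}$. Row-finite: each $v\Lambda^n$ finite. Blue paths: degree in $\mathbb Ne_1$ (edges $\Lambda^{e_1}$); red paths: degree in $\mathbb Ne_2$ (edges $\Lambda^{e_2}$). $\lambda(m,n)$ is the unique path with $\lambda=\lambda'\lambda(m,n)\lambda''$, $d(\lambda')=m$, $d(\lambda(m,n))=n-m$; $\lambda(n)=\lambda(n,n)$. A cycle: $d(\lambda)\ne0$, $r(\lambda)=s(\lambda)$, $\lambda(n)\ne s(\lambda)$ for $0<n<d(\lambda)$; isolated: no $n\le d(\lambda)$ with $r(\lambda)\Lambda^n\setminus\{\lambda(0,n)\}\ne\emptyset$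 and no $n\le d(\lambda)$ with $\Lambda^ns(\lambda)\setminus\{\lambda(d(\lambda)-n,d(\lambda))\}\ne\emptyset$. A rank-2 Bratteli diagram of infinite depth is a row-finite 2-graph with $\Lambda^0=\bigsqcup_{n\in\mathbb N}V_n$, each $V_n$ nonempty finite, such that every blue edge $e$ has $r(e)\in V_n$, $s(e)\in V_{n+1}$ for some $n$; every $v$ with $\Lambda^{e_1}v=\emptyset$ lies in $V_0$; every vertex receives a blue edge; every vertex lies on an isolated cycle of red edges; and every red edge has range and source in the same $V_n$. Write $V_n=\bigsqcup_{j=1}^{c_n}V_{n,j}$ with $V_{n,j}$ the vertex sets of the distinct isolated red cycles in $V_n$; the associated data are $c_n$, $A_n(i,j)=|v\Lambda^{e_1}V_{n+1,i}|$ ($v\in V_{n,j}$), $B_n(i,j)=|V_{n,j}\Lambda^{e_1}w|$ ($w\in V_{n+1,i}$), and $T_n=\mathrm{diag}(|V_{n,1}|,\dots,|V_{n,c_n}|)$ (these are independent of the choices). For a blue path $\alpha$, let $f$ be the unique red edge with $s(f)=r(\alpha)$ and $\mathcal F(\alpha)$ the unique blue path with $f\alpha=\mathcal F(\alpha)f'$ for a red edge $f'$; $o(\alpha)=\min\{k>0:\mathcal F^k(\alpha)=\alpha\}$. An integer matrix is proper if its entries are nonnegative and every row and column has a nonzero entry. *)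

From HB Require Import structures.
From mathcomp Require Import all_boot all_order all_algebra.
Set Implicit Arguments.
Unset Strict Implicit.
Unset Printing Implicit Defensive.
Import GRing.Theory Num.Theory.

Definition deg2 := (nat * nat)%type.
Definition dadd (m n : deg2) : deg2 := ((m.1 + n.1)%N, (m.2 + n.2)%N).
Definition dsub (n m : deg2) : deg2 := ((n.1 - m.1)%N, (n.2 - m.2)%N).
Definition dle (m n : deg2) : bool := ((m.1 <= n.1) && (m.2 <= n.2))%N.
Definition d0 : deg2 := (0%N, 0%N).
Definition e1 : deg2 := (1%N, 0%N).
Definition e2 : deg2 := (0%N, 1%N).

Definition card_is (T : eqType) (P : T -> Prop) (k : nat) : Prop :=
  exists sq : seq T, uniq sq /\ (forall x, x \in sq <-> P x) /\ size sq = k.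

(** * Data of a small category with a degree functor into N^2.
    Objects are identified with vertices (degree-0 paths, via [idm]).
    [comp mu nu] is the path "mu nu" (defined when [sc mu = rg nu]);
    [rg] = range (codomain), [sc] = source (domain). *)
Record kgraph_data (Obj Mor : Type) := KGraphData {
  rg : Mor -> Obj;
  sc : Mor -> Obj;
  idm : Obj -> Mor;
  comp : Mor -> Mor -> Mor;
  dg : Mor -> deg2 }.

Section TwoGraphs.
Variables (Obj Mor : countType) (L : kgraph_data Obj Mor).
Local Notation r := (rg L).
Local Notation s := (sc L).
Local Notation d := (dg L).
Local Notation id := (idm L).
Local Notation comp := (comp L).

Definition is_two_graph : Prop :=
  (forall v, r (id v) = v /\ s (id v) = v) /\
  (forall mu nu, s mu = r nu -> r (comp mu nu) = r mu /\ s (comp mu nu) = s nu) /\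
  (forall l, comp (id (r l)) l = l /\ comp l (id (s l)) = l) /\
  (forall l mu nu, s l = r mu -> s mu = r nu ->
     comp (comp l mu) nu = comp l (comp mu nu)) /\
  (forall v, d (id v) = d0) /\
  (forall mu nu, s mu = r nu -> d (comp mu nu) = dadd (d mu) (d nu)) /\
  (forall l m n, d l = dadd m n ->
     exists! p : Mor * Mor,
       d p.1 = m /\ d p.2 = n /\ s p.1 = r p.2 /\ l = comp p.1 p.2).

Definition row_finite : Prop :=
  forall (v : Obj) (n : deg2), exists sq : seq Mor,
    forall l, r l = v -> d l = n -> l \in sq.

(** [segment l m n mu] : mu = λ(m,n), i.e. λ = λ' mu λ'' with d λ' = m,
    d mu = n - m (for m <= n <= d λ). *)
Definition segment (l : Mor) (m n : deg2) (mu : Mor) : Prop :=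
  dle m n /\ dle n (d l) /\
  exists l' l'', d l' = m /\ d mu = dsub n m /\ s l' = r mu /\ s mu = r l'' /\
                 l = comp l' (comp mu l'').

Definition lies_on (v : Obj) (l : Mor) : Prop :=
  exists n, dle n (d l) /\ segment l n n (id v).

Definition is_cycle (l : Mor) : Prop :=
  d l <> d0 /\ r l = s l /\
  forall n, dle n (d l) -> n <> d0 -> n <> d l ->
    forall mu, segment l n n mu -> mu <> id (s l).

Definition is_isolated (l : Mor) : Prop :=
  (forall n, dle n (d l) -> forall mu, r mu = r l -> d mu = n ->
      segment l d0 n mu) /\
  (forall n, dle n (d l) -> forall mu, s mu = s l -> d mu = n ->
      segment l (dsub (d l) n) (d l) mu).

Definition is_red (l : Mor) : Prop := (d l).1 = 0%N.
Definition is_blue (l : Mor) : Prop := (d l).2 = 0%N.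

Definition isolated_red_cycle (l : Mor) : Prop :=
  is_red l /\ is_cycle l /\ is_isolated l.

(** Rank-2 Bratteli diagram of infinite depth, with V_n = level^{-1}(n). *)
Definition is_rank2_bratteli (level : Obj -> nat) : Prop :=
  is_two_graph /\ row_finite /\
  (forall n, exists v, level v = n) /\
  (forall n, exists sq : seq Obj, forall v, level v = n -> v \in sq) /\
  (forall e, d e = e1 -> level (s e) = (level (r e)).+1) /\
  (forall v, (forall e, d e = e1 -> s e <> v) -> level v = 0%N) /\
  (forall v, exists e, d e = e1 /\ r e = v) /\
  (forall v, exists l, isolated_red_cycle l /\ lies_on v l) /\
  (forall f, d f = e2 -> level (r f) = level (s f)).

Definition Vnj (level lab : Obj -> nat) (n j : nat) (v : Obj) : Prop :=
  level v = n /\ lab v = j.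

Definition cycle_decomposition (level lab : Obj -> nat) (c : nat -> nat) : Prop :=
  (forall v, (lab v < c (level v))%N) /\
  (forall n j, (j < c n)%N -> exists l, isolated_red_cycle l /\
       (forall v, lies_on v l <-> Vnj level lab n j v)).

Definition has_associated_data (level lab : Obj -> nat) (c : nat -> nat)
  (A B : forall n, 'M[int]_(c n.+1, c n)) (T : forall n, 'M[int]_(c n)) : Prop :=
  cycle_decomposition level lab c /\
  (forall n (i : 'I_(c n.+1)) (j : 'I_(c n)) (v : Obj), Vnj level lab n j v ->
     exists k, card_is (fun e => d e = e1 /\ r e = v /\ Vnj level lab n.+1 i (s e)) k
               /\ A n i j = Posz k) /\
  (forall n (i : 'I_(c n.+1)) (j : 'I_(c n)) (w : Obj), Vnj level lab n.+1 i w ->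
     exists k, card_is (fun e => d e = e1 /\ s e = w /\ Vnj level lab n j (r e)) k
               /\ B n i j = Posz k) /\
  (forall n (i j : 'I_(c n)), i != j -> T n i j = 0%R) /\
  (forall n (j : 'I_(c n)), exists k, card_is (Vnj level lab n j) k /\ T n j j = Posz k).

Definition F_rel (a b : Mor) : Prop :=
  exists f f', d f = e2 /\ s f = r a /\ d f' = e2 /\ s b = r f' /\ is_blue b /\
               comp f a = comp b f'.

Fixpoint F_iter (k : nat) (a b : Mor) : Prop :=
  match k with
  | 0 => a = b
  | k'.+1 => exists g, F_rel a g /\ F_iter k' g b
  end.

Definition orbit_order (a : Mor) (k : nat) : Prop :=
  (0 < k)%N /\ F_iter k a a /\ (forall i, (0 < i < k)%N -> ~ F_iter i a a).

End TwoGraphs.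

Definition proper_mx (m n : nat) (M : 'M[int]_(m, n)) : Prop :=
  (forall i j, (0 <= M i j)%R) /\
  (forall i, exists j, M i j != 0%R) /\
  (forall j, exists i, M i j != 0%R).

Definition diagonal_mx (n : nat) (M : 'M[int]_n) : Prop :=
  forall i j, i != j -> M i j = 0%R.

From Pilot Require Import Defs.
From HB Require Import structures.
From mathcomp Require Import all_boot all_order all_algebra.
Set Implicit Arguments.
Unset Strict Implicit.
Unset Printing Implicit Defensive.
Import GRing.Theory.

(* A graph E with an automorphism (sigma on vertices, tau on edges) yields a
   2-graph: a path of degree (p, q) is a path of p blue edges of E followed by
   q red edges, the red edge with source w having range sigma w, and a red edge
   is pushed past a blue edge e by replacing e with tau e.  For the data
   (c, A, B, T), take as vertices the points of cycles V_{n,j} of length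
   T_n(j,j), as blue edges between V_{n+1,i} and V_{n,j} the integers modulo
   N = A_n(i,j) T_n(j,j) = T_{n+1}(i,i) B_n(i,j), with range and source the
   residues modulo the two cycle lengths, and let sigma and tau add one.  The
   counts A_n(i,j), B_n(i,j) and |V_{n,j}| are then sizes of fibres of these
   residue maps, the red cycles are the sigma-orbits, and the F-orbit of a
   blue edge is its tau-orbit, of length N. *)

Lemma iter_can (T : Type) (f g : T -> T) n : cancel f g -> cancel (iter n f) (iter n g).
Proof. by move=> fK; elim: n => // n IHn x; rewrite iterSr iterS fK IHn. Qed.

Lemma iter_conj (T U : Type) (f : T -> T) (g : U -> U) (h : T -> U) :
  (forall x, h (f x) = g (h x)) -> forall n x, h (iter n f x) = iter n g (h x).
Proof. by move=> hf; elim=> // n IHn x; rewrite !iterS hf IHn. Qed.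

Definition exact_period (T : eqType) (f : T -> T) (x : T) (t : nat) : Prop :=
  0 < t /\ forall k, (iter k f x == x) = (t %| k).

Lemma exact_period_bij (T : eqType) (f : T -> T) (p : T -> nat) :
  (forall x, p (f x) = p x) -> (forall x, exact_period f x (p x)) -> bijective f.
Proof.
move=> pf per; have fp x : iter (p x) f x = x by apply/eqP; rewrite (per x).2.
have p_gt0 x : 0 < p x by case: (per x).
exists (fun x => iter (p x).-1 f x) => x; first by rewrite pf -iterSr prednK.
by rewrite -iterS prednK.
Qed.

Lemma card_is_ord_inj (X : eqType) (P : X -> Prop) K (f : 'I_K -> X) :
  injective f -> (forall x, P x <-> exists m, x = f m) -> card_is P K.
Proof.
move=> f_inj fP; exists (map f (enum 'I_K)); split; first by rewrite map_inj_uniq ?enum_uniq.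
split; last by rewrite size_map size_enum_ord.
move=> x; split=> [/mapP[m _ ->] | /fP[m ->]]; first by apply/fP; exists m.
by rewrite map_f ?mem_enum.
Qed.

(* [SkewPath v p q w]: the blue path [p] from [v], followed by [q] red edges
   ending at [w]. *)
Record skew_path (V E : Type) := SkewPath { rng : V; blue : seq E; red : nat; src : V }.

Definition skew_tuple V E (m : skew_path V E) := (rng m, blue m, red m, src m).
Definition tuple_skew V E (x : V * seq E * nat * V) := SkewPath x.1.1.1 x.1.1.2 x.1.2 x.2.
Lemma skew_tupleK V E : cancel (@skew_tuple V E) (@tuple_skew V E). Proof. by case. Qed.
HB.instance Definition _ (V E : countType) :=
  Countable.copy (skew_path V E) (can_type (@skew_tupleK V E)).

Section SkewProduct.
Variables (V E : countType) (r s : E -> V) (sigma : V -> V) (tau : E -> E).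
Hypotheses (sigma_bij : bijective sigma) (tau_bij : bijective tau).
Hypotheses (r_tau : forall e, r (tau e) = sigma (r e)) (s_tau : forall e, s (tau e) = sigma (s e)).

(* [r p_0 = v] and [r p_(k+1) = s p_k]. *)
Definition is_path (v : V) (p : seq E) : bool := map r p == belast v (map s p).
Definition path_end (v : V) (p : seq E) : V := last v (map s p).

Lemma is_path_cons v e p : is_path v (e :: p) = (r e == v) && is_path (s e) p.
Proof. by rewrite /is_path /= eqseq_cons. Qed.

Lemma is_path_cat v p p' :
  is_path v (p ++ p') = is_path v p && is_path (path_end v p) p'.
Proof. by rewrite /is_path !map_cat belast_cat eqseq_cat // size_map size_belast size_map. Qed.

Lemma path_end_cat v p p' : path_end v (p ++ p') = path_end (path_end v p) p'.
Proof. by rewrite /path_end map_cat last_cat. Qed.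

Lemma iter_sigma_inj n : injective (iter n sigma).
Proof. by case: sigma_bij => sigma' sigmaK _; apply: can_inj (iter_can n sigmaK). Qed.

Lemma iter_tau_inj n : injective (iter n tau).
Proof. by case: tau_bij => tau' tauK _; apply: can_inj (iter_can n tauK). Qed.

Lemma is_path_map n v p : is_path (iter n sigma v) (map (iter n tau) p) = is_path v p.
Proof.
have rE : r \o iter n tau =1 iter n sigma \o r by exact: iter_conj.
have sE : s \o iter n tau =1 iter n sigma \o s by exact: iter_conj.
rewrite /is_path -!map_comp (eq_map rE) (eq_map sE).
rewrite (map_comp (iter n sigma) r) (map_comp (iter n sigma) s) belast_map.
by rewrite (inj_eq (inj_map (@iter_sigma_inj n))).
Qed.

Lemma path_end_map n v p :
  path_end (iter n sigma v) (map (iter n tau) p) = iter n sigma (path_end v p).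
Proof.
have sE : s \o iter n tau =1 iter n sigma \o s by exact: iter_conj.
by rewrite /path_end -map_comp (eq_map sE) (map_comp (iter n sigma) s) last_map.
Qed.

Definition skew_valid (m : skew_path V E) : bool :=
  is_path (rng m) (blue m) && (iter (red m) sigma (src m) == path_end (rng m) (blue m)).

(* The red part of [m] is pushed past the blue part of [m'], which is twisted
   by tau^(red m). *)
Definition skew_comp (m m' : skew_path V E) : skew_path V E :=
  SkewPath (rng m) (blue m ++ map (iter (red m) tau) (blue m')) (red m + red m') (src m').

Lemma skew_valid_comp m m' :
  skew_valid m -> skew_valid m' -> src m = rng m' -> skew_valid (skew_comp m m').
Proof.
case: m m' => v p q w [v' p' q' w'] /andP[/= pP /eqP /= pE] /andP[/= p'P /eqP /= p'E] /= wv'.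
subst v'; rewrite /skew_valid /= is_path_cat pP -pE is_path_map p'P.
by rewrite path_end_cat -pE path_end_map -p'E -iterD eqxx.
Qed.

Lemma skew_valid_id v : skew_valid (SkewPath v [::] 0 v).
Proof. by rewrite /skew_valid /is_path /path_end /= !eqxx. Qed.

Definition skew_mor := {m : skew_path V E | skew_valid m}.

Definition skew_graph : kgraph_data V skew_mor :=
  @KGraphData V skew_mor (fun m => rng (val m)) (fun m => src (val m))
    (fun v => Sub _ (skew_valid_id v))
    (fun mu nu => insubd mu (skew_comp (val mu) (val nu)))
    (fun m => (size (blue (val m)), red (val m))).

Local Notation L := skew_graph.

Lemma val_comp mu nu :
  sc L mu = rg L nu -> val (Defs.comp L mu nu) = skew_comp (val mu) (val nu).
Proof. by move=> mu_nu; rewrite insubdK //; apply: skew_valid_comp (valP mu) (valP nu) _. Qed.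

Lemma rg_comp mu nu : sc L mu = rg L nu -> rg L (Defs.comp L mu nu) = rg L mu.
Proof. by move=> mu_nu; rewrite [LHS]/= val_comp. Qed.

Lemma comp_id_l l : Defs.comp L (idm L (rg L l)) l = l.
Proof.
apply: val_inj; rewrite val_comp //; case: l => -[v p q w] ?.
by rewrite /skew_comp /= map_id.
Qed.

Lemma comp_id_r l : Defs.comp L l (idm L (sc L l)) = l.
Proof.
apply: val_inj; rewrite val_comp //; case: l => -[v p q w] ?.
by rewrite /skew_comp /= cats0 addn0.
Qed.

Lemma map_iterD n n' p :
  map (iter n tau) (map (iter n' tau) p) = map (iter (n + n') tau) p.
Proof. by rewrite -map_comp; apply: eq_map => e; rewrite /= iterD. Qed.

Lemma skew_compA m m' m'' :
  skew_comp (skew_comp m m') m'' = skew_comp m (skew_comp m' m'').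
Proof. by rewrite /skew_comp /= map_cat map_iterD catA addnA. Qed.

Lemma skew_comp_cancel mu nu mu' nu' :
  dg L mu = dg L mu' -> sc L mu = rg L nu -> sc L mu' = rg L nu' ->
  Defs.comp L mu nu = Defs.comp L mu' nu' -> mu = mu' /\ nu = nu'.
Proof.
move=> d_eq mu_nu mu'_nu' /(congr1 val); rewrite !val_comp //.
case: mu nu mu' nu' d_eq mu_nu mu'_nu' => [[v p q w] muP] [[x pn qn y] nuP].
case=> [[v' p' q' w'] mu'P] [[x' pn' qn' y'] nu'P] /= [size_p q_eq] wx w'x'.
subst q' x x'; rewrite /skew_comp /=; case=> v_eq /eqP; rewrite eqseq_cat //.
case/andP=> /eqP pp' /eqP /(inj_map (@iter_tau_inj q)) pn_eq /addnI qn_eq y_eq.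
subst v' p' pn' qn' y'.
have w_eq : w = w'.
  by apply: (@iter_sigma_inj q); case/andP: muP mu'P => _ /eqP -> /andP[_ /eqP ->].
by subst w'; split; apply: val_inj.
Qed.

Lemma skew_factor l m n : dg L l = dadd m n ->
  exists! pr : skew_mor * skew_mor, dg L pr.1 = m /\ dg L pr.2 = n /\
    sc L pr.1 = rg L pr.2 /\ l = Defs.comp L pr.1 pr.2.
Proof.
case: sigma_bij tau_bij => sigma' _ Ksigma [tau' _ Ktau].
case: l => -[v p q w] lP; case: m n => [m1 m2] [n1 n2] [/= size_p q_eq].
have /andP[/= pP /eqP /= pE] := lP.
move: pP; rewrite -{1}(cat_take_drop m1 p) is_path_cat => /andP[p1P p2P].
set w1 := iter m2 sigma' (path_end v (take m1 p)).
set p2 := map (iter m2 tau') (drop m1 p).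
have w1E : iter m2 sigma w1 = path_end v (take m1 p) by rewrite /w1 (iter_can m2 Ksigma).
have p2E : map (iter m2 tau) p2 = drop m1 p by rewrite /p2 (mapK (iter_can m2 Ktau)).
have muP : skew_valid (SkewPath v (take m1 p) m2 w1) by rewrite /skew_valid /= p1P w1E eqxx.
have nuP : skew_valid (SkewPath w1 p2 n2 w).
  rewrite /skew_valid /= -(is_path_map m2) -(inj_eq (@iter_sigma_inj m2)) -iterD.
  by rewrite -path_end_map w1E p2E p2P -path_end_cat cat_take_drop -q_eq pE eqxx.
have mu_nu : sc L (Sub _ muP) = rg L (Sub _ nuP) by [].
have l_eq : Sub _ lP = Defs.comp L (Sub _ muP) (Sub _ nuP).
  by apply: val_inj; rewrite val_comp // /skew_comp /= p2E cat_take_drop q_eq.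
have d_mu : dg L (Sub _ muP) = (m1, m2) by rewrite /= size_takel // size_p leq_addr.
exists (Sub _ muP, Sub _ nuP); split.
  by split=> //; split; first by rewrite /= size_map size_drop size_p addKn.
case=> mu' nu' [d_mu' [_ [mu'_nu' l_eq']]].
have d_eq := etrans d_mu (esym d_mu').
by have [-> ->] := skew_comp_cancel d_eq mu_nu mu'_nu' (etrans (esym l_eq) l_eq').
Qed.

Lemma skew_two_graph : is_two_graph L.
Proof.
split=> [v|]; first by [].
split=> [mu nu mu_nu|]; first by rewrite /= !val_comp.
split=> [l|]; first by rewrite comp_id_l comp_id_r.
split=> [l mu nu l_mu mu_nu|].
  have l_munu : sc L l = rg L (Defs.comp L mu nu) by rewrite rg_comp.
  have lmu_nu : sc L (Defs.comp L l mu) = rg L nu by rewrite [LHS]/= val_comp.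
  by apply: val_inj; rewrite !val_comp // skew_compA.
split=> [v|]; first by [].
split=> [mu nu mu_nu|]; first by rewrite [LHS]/= val_comp //= size_cat size_map.
exact: skew_factor.
Qed.

Fixpoint paths_of_size (into : V -> seq E) n v : seq (seq E) :=
  if n is n'.+1 then [seq e :: p | e <- into v, p <- paths_of_size into n' (s e)]
  else [:: [::]].

Lemma mem_paths_of_size (into : V -> seq E) v p : (forall e, e \in into (r e)) ->
  is_path v p -> p \in paths_of_size into (size p) v.
Proof.
move=> intoP; elim: p v => [|e p IHp] v; first by rewrite inE.
rewrite is_path_cons => /andP[/eqP <- pP].
by apply/allpairsPdep; exists e, p; split; rewrite ?intoP ?IHp.
Qed.

Lemma skew_row_finite (into : V -> seq E) : (forall e, e \in into (r e)) -> row_finite L.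
Proof.
move=> intoP v [n1 n2]; case: sigma_bij => sigma' sigmaK _.
exists (pmap insub [seq SkewPath v p n2 (iter n2 sigma' (path_end v p))
                   | p <- paths_of_size into n1 v]).
case=> -[v' p q w] lP /= <- [<- <-]; rewrite mem_pmap_sub /=.
have /andP[/= pP /eqP /= pE] := lP.
by apply/mapP; exists p; rewrite ?mem_paths_of_size // -pE (iter_can q sigmaK).
Qed.

Lemma skew_valid_edge e : skew_valid (SkewPath (r e) [:: e] 0 (s e)).
Proof. by rewrite /skew_valid is_path_cons /is_path /path_end /= !eqxx. Qed.

Definition blue_edge e : skew_mor := Sub _ (skew_valid_edge e).

Lemma blue_edge_inj : injective blue_edge.
Proof. by move=> e e' /(congr1 (fun l => blue (val l))) [->]. Qed.

Lemma blue_edgeP l : dg L l = e1 -> exists e, l = blue_edge e.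
Proof.
case: l => -[v p q w] lP [size1 q0]; subst q.
case: p size1 lP => [|e []] // _ lP; exists e; apply: val_inj => /=.
by case/andP: lP; rewrite is_path_cons andbT /= => /eqP -> /eqP ->.
Qed.

Lemma card_is_blue_edges (P : skew_mor -> Prop) k :
  card_is (fun e => P (blue_edge e)) k -> card_is (fun l => dg L l = e1 /\ P l) k.
Proof.
case=> es [es_uniq [esP size_es]]; exists (map blue_edge es).
split; first by rewrite map_inj_uniq //; apply: blue_edge_inj.
split=> [l|]; last by rewrite size_map.
by split=> [/mapP[e /esP Pe ->] | [/blue_edgeP[e ->] /esP Pe]]; last exact: map_f.
Qed.

Lemma skew_valid_red n w : skew_valid (SkewPath (iter n sigma w) [::] n w).
Proof. by rewrite /skew_valid /is_path /path_end /= !eqxx. Qed.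

Definition red_path n w : skew_mor := Sub _ (skew_valid_red n w).

Lemma red_pathP l n : dg L l = (0, n) -> l = red_path n (sc L l).
Proof.
case: l => -[v p q w] lP [/size0nil p0 qn]; subst p q; apply: val_inj => /=.
by case/andP: lP => _ /eqP /= ->.
Qed.

Lemma comp_red_path n n' w :
  Defs.comp L (red_path n (iter n' sigma w)) (red_path n' w) = red_path (n + n') w.
Proof. by apply: val_inj; rewrite val_comp // /skew_comp /= iterD. Qed.

Lemma segment_head l m n mu : segment L l m n mu ->
  exists l', [/\ dg L l' = m, sc L l' = rg L mu & rg L l' = rg L l].
Proof.
case=> _ [_ [l' [l'' [d_l' [_ [l'_mu [mu_l'' ->]]]]]]].
by exists l'; split=> //; rewrite rg_comp // rg_comp.
Qed.

Lemma red_loop_cycle v t : exact_period sigma v t -> is_cycle L (red_path t v).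
Proof.
case=> t_gt0 per; have vE : iter t sigma v = v by apply/eqP; rewrite per.
split; first by case=> t0; rewrite t0 in t_gt0.
split; first exact: vE.
case=> m b /andP[/= m0 b_le] n_nz n_nt mu /segment_head[l' [d_l' l'_mu l'_l]] mu_id.
rewrite mu_id in l'_mu; move: m0 d_l' n_nz n_nt; rewrite leqn0 => /eqP -> d_l' n_nz n_nt.
have b_gt0 : 0 < b by rewrite lt0n; apply/eqP => b0; apply: n_nz; rewrite b0.
have [w l'E] : exists w, l' = red_path b w by exists (sc L l'); exact: red_pathP.
subst l'; move: l'_mu l'_l => /= -> /eqP; rewrite vE per => /(dvdn_leq b_gt0) t_le.
have b_t : b = t by apply/eqP; rewrite eqn_leq b_le t_le.
by apply: n_nt; rewrite b_t.
Qed.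

Lemma red_loop_isolated v t : exact_period sigma v t -> is_isolated L (red_path t v).
Proof.
case=> t_gt0 per; have vE : iter t sigma v = v by apply/eqP; rewrite per.
split=> -[m b] /andP[/= m0 b_le] mu mu_end.
all: rewrite leqn0 in m0; move/eqP: m0 => -> d_mu.
all: have [w muE] : exists w, mu = red_path b w by exists (sc L mu); exact: red_pathP.
all: subst mu.
- have wE : w = iter (t - b) sigma v.
    by apply: (@iter_sigma_inj b); rewrite -iterD subnKC //; exact: mu_end.
  subst w; split; first by rewrite /dle /= leq0n.
  split; first by rewrite /dle /= b_le.
  exists (idm L (rg L (red_path t v))), (red_path (t - b) v).
  split; first by [].
  split; first by rewrite /dsub /= !subn0.
  split; first by rewrite /= -iterD subnKC.
  split; first by [].
  by rewrite comp_red_path subnKC // comp_id_l.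
- move: mu_end => /= ->; split; first by rewrite /dle /= leq_subr.
  split; first by rewrite /dle /= leqnn.
  exists (red_path (t - b) (iter b sigma v)), (idm L v).
  split; first by [].
  split; first by rewrite /dsub /= (subKn b_le).
  split; first by [].
  split; first by [].
  by rewrite comp_id_r comp_red_path subnK.
Qed.

Lemma red_loop_isolated_cycle v t :
  exact_period sigma v t -> isolated_red_cycle L (red_path t v).
Proof. by move=> per; split; last split; [| exact: red_loop_cycle | exact: red_loop_isolated]. Qed.

Lemma red_loop_lies_on v t u :
  exact_period sigma v t -> lies_on L u (red_path t v) <-> exists k, iter k sigma u = v.
Proof.
case=> t_gt0 per; have vE : iter t sigma v = v by apply/eqP; rewrite per.
split=> [[[m b] [/andP[/= m0 _] /segment_head[l' [d_l' l'_u l'_l]]]] | [k uE]].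
  move: m0 d_l'; rewrite leqn0 => /eqP -> d_l'.
  have [w l'E] : exists w, l' = red_path b w by exists (sc L l'); exact: red_pathP.
  by subst l'; exists b; move: l'_u l'_l => /= -> ->.
have uP : iter t sigma u = u.
  by apply: (@iter_sigma_inj k); rewrite -iterD addnC iterD uE vE.
have ukE : iter (k %% t) sigma u = v.
  by rewrite -uE {2}(divn_eq k t) addnC iterD iterM (iter_fix _ uP).
have b_le : k %% t <= t by rewrite ltnW // ltn_pmod.
have vuE : iter (t - k %% t) sigma v = u by rewrite -ukE -iterD subnK.
exists (0, k %% t); split; first by rewrite /dle /= b_le.
split; first by rewrite /dle /= leqnn.
split; first by rewrite /dle /= b_le.
exists (red_path (k %% t) u), (red_path (t - k %% t) v).
split; first by [].
split; first by rewrite /dsub /= !subnn.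
split; first by [].
split; first exact: (esym vuE).
by rewrite -vuE (comp_id_l (red_path _ v)) comp_red_path subnKC.
Qed.

Lemma F_rel_blue_edge e b : F_rel L (blue_edge e) b <-> b = blue_edge (tau e).
Proof.
split=> [[f [f' [d_f [f_e [d_f' [b_f' [b_blue fe_bf']]]]]]] | ->].
  have [w f_eq] : exists w, f = red_path 1 w by exists (sc L f); exact: red_pathP.
  have [w' f'_eq] : exists w, f' = red_path 1 w by exists (sc L f'); exact: red_pathP.
  subst f f'; have := congr1 (fun l => blue (val l)) fe_bf'.
  rewrite !val_comp // /skew_comp /= cats0 => blue_b.
  have d_b : dg L b = e1 by move: b_blue; rewrite /is_blue /= -blue_b => ->.
  by have [e' b_eq] := blue_edgeP d_b; subst b; case: blue_b => ->.
have b_f' : sc L (blue_edge (tau e)) = rg L (red_path 1 (s e)) by exact: s_tau.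
exists (red_path 1 (r e)), (red_path 1 (s e)); do !split=> //.
by apply: val_inj; rewrite !val_comp // /skew_comp /= r_tau.
Qed.

Lemma F_iter_blue_edge k e b : F_iter L k (blue_edge e) b <-> b = blue_edge (iter k tau e).
Proof.
elim: k e b => [|k IHk] e b /=; first by split=> [<-|->].
split=> [[g [/F_rel_blue_edge -> /IHk ->]] | ->]; first by rewrite -iterSr.
by exists (blue_edge (tau e)); split; [exact/F_rel_blue_edge | apply/IHk; rewrite -iterS iterSr].
Qed.

Lemma orbit_order_blue_edge e t : exact_period tau e t -> orbit_order L (blue_edge e) t.
Proof.
case=> t_gt0 per.
have iterP k : F_iter L k (blue_edge e) (blue_edge e) <-> t %| k.
  rewrite -per; split=> [/F_iter_blue_edge/blue_edge_inj <- | /eqP eE] //.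
  by apply/F_iter_blue_edge; rewrite eE.
split=> //; split; first exact/iterP.
by move=> k /andP[k_gt0 k_lt] /iterP /(dvdn_leq k_gt0); rewrite leqNgt k_lt.
Qed.

End SkewProduct.

Definition cshift (t x : nat) : nat := x.+1 %% t.

Lemma iter_cshift t x k : x < t -> iter k (cshift t) x = (x + k) %% t.
Proof.
move=> xt; elim: k => [|k IHk]; first by rewrite addn0 modn_small.
by rewrite iterS IHk /cshift -addn1 modnDml addn1 addnS.
Qed.

Lemma cshift_period t x : x < t -> exact_period (cshift t) x t.
Proof.
move=> xt; split=> [|k]; first exact: leq_ltn_trans xt.
by rewrite iter_cshift // -{2}(modn_small xt) -{2}(addn0 x) eqn_modDl mod0n.
Qed.

Lemma ltn_add_mul t a x m : x < t -> m < a -> x + m * t < a * t.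
Proof.
move=> xt ma; apply: (@leq_trans (t + m * t)); first by rewrite ltn_add2r.
by rewrite -mulSn leq_mul2r ma orbT.
Qed.

Lemma modn_fibreP t a x k : x < t ->
  (k < a * t /\ k %% t = x) <-> exists2 m, m < a & k = x + m * t.
Proof.
move=> xt; have t_gt0 : 0 < t by apply: leq_ltn_trans xt.
split=> [[ka <-] | [m ma ->]]; last by rewrite ltn_add_mul // addnC modnMDl modn_small.
by exists (k %/ t); rewrite ?ltn_divLR // addnC -divn_eq.
Qed.

Section Construction.
Variables (c : nat -> nat) (A B : forall n, 'M[int]_(c n.+1, c n)) (T : forall n, 'M[int]_(c n)).
Hypothesis c_gt0 : forall n, 0 < c n.
Hypothesis A_proper : forall n, proper_mx (A n).
Hypothesis B_proper : forall n, proper_mx (B n).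
Hypothesis T_proper_diag : forall n, proper_mx (T n) /\ diagonal_mx (T n).
Hypothesis AT_TB : forall n, (A n *m T n = T n.+1 *m B n)%R.

(* Indices out of range are sent to 0; only in-range ones are ever used. *)
Definition ord_of n j : 'I_(c n) := insubd (Ordinal (c_gt0 n)) j.
Definition tn n j := absz (T n (ord_of n j) (ord_of n j)).
Definition an n i j := absz (A n (ord_of n.+1 i) (ord_of n j)).
Definition bn n i j := absz (B n (ord_of n.+1 i) (ord_of n j)).
Definition nedges n i j := an n i j * tn n j.

Lemma ord_ofK n (j : 'I_(c n)) : ord_of n j = j.
Proof. by apply: val_inj; rewrite /ord_of val_insubd ltn_ord. Qed.

Lemma val_ord_of n j : j < c n -> val (ord_of n j) = j.
Proof. by move=> jc; rewrite /ord_of val_insubd jc. Qed.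

Lemma A_nat n i j : A n i j = Posz (an n i j).
Proof. by rewrite /an !ord_ofK gez0_abs //; case: (A_proper n). Qed.

Lemma B_nat n i j : B n i j = Posz (bn n i j).
Proof. by rewrite /bn !ord_ofK gez0_abs //; case: (B_proper n). Qed.

Lemma T_nat n j : T n j j = Posz (tn n j).
Proof. by rewrite /tn !ord_ofK gez0_abs //; case: (T_proper_diag n) => -[]. Qed.

Lemma tn_gt0 n j : j < c n -> 0 < tn n j.
Proof.
move=> jc; have [[_ [_ T_col]] T_diag] := T_proper_diag n.
have [i Tij] := T_col (ord_of n j).
have i_j : i = ord_of n j by apply/eqP; apply: contraNT Tij => /T_diag ->.
by move: Tij; rewrite i_j /tn absz_gt0.
Qed.

Lemma nedgesE n i j : i < c n.+1 -> j < c n -> nedges n i j = tn n.+1 i * bn n i j.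
Proof.
move=> ic jc; pose entry (M : 'M[int]_(c n.+1, c n)) := M (ord_of n.+1 i) (ord_of n j).
have := congr1 entry (AT_TB n).
have [[_ T_diag] [_ T'_diag]] := (T_proper_diag n, T_proper_diag n.+1).
rewrite /entry !mxE (bigD1 (ord_of n j)) // (bigD1 (ord_of n.+1 i)) //= !big1 ?addr0.
- by rewrite A_nat B_nat !T_nat !val_ord_of // -!PoszM => -[].
- by move=> k k_i; rewrite T'_diag ?mul0r // eq_sym.
- by move=> k k_j; rewrite T_diag ?mulr0.
Qed.

Lemma exists_an_gt0 n j : j < c n -> exists2 i, i < c n.+1 & 0 < an n i j.
Proof.
move=> jc; have [_ [_ A_col]] := A_proper n; have [i Aij] := A_col (ord_of n j).
by exists i; rewrite ?ltn_ord // /an ord_ofK absz_gt0.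
Qed.

Lemma exists_bn_gt0 n i : i < c n.+1 -> exists2 j, j < c n & 0 < bn n i j.
Proof.
move=> ic; have [_ [B_row _]] := B_proper n; have [j Bij] := B_row (ord_of n.+1 i).
by exists j; rewrite ?ltn_ord // /bn ord_ofK absz_gt0.
Qed.

(* [(n, j, x)] is the x-th vertex of the cycle V_{n,j}, and [(n, i, j, k)] the
   k-th blue edge from V_{n+1,i} to V_{n,j}. *)
Definition vert_ok (v : nat * nat * nat) : bool :=
  let: (n, j, x) := v in (j < c n) && (x < tn n j).

Definition edge_ok (e : nat * nat * nat * nat) : bool :=
  let: (n, i, j, k) := e in [&& i < c n.+1, j < c n & k < nedges n i j].

Definition shift_vert (v : nat * nat * nat) : nat * nat * nat :=
  let: (n, j, x) := v in (n, j, cshift (tn n j) x).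

Definition shift_edge (e : nat * nat * nat * nat) : nat * nat * nat * nat :=
  let: (n, i, j, k) := e in (n, i, j, cshift (nedges n i j) k).

Definition edge_rng (e : nat * nat * nat * nat) : nat * nat * nat :=
  let: (n, i, j, k) := e in (n, j, k %% tn n j).

Definition edge_src (e : nat * nat * nat * nat) : nat * nat * nat :=
  let: (n, i, j, k) := e in (n.+1, i, k %% tn n.+1 i).

Lemma vert_ok_shift v : vert_ok v -> vert_ok (shift_vert v).
Proof. by case: v => -[n j] x /andP[jc xt]; rewrite /= jc ltn_pmod // tn_gt0. Qed.

Lemma edge_ok_shift e : edge_ok e -> edge_ok (shift_edge e).
Proof.
case: e => -[[n i] j] k /and3P[ic jc kN].
by rewrite /= ic jc ltn_pmod //; apply: leq_ltn_trans kN.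
Qed.

Lemma vert_ok_rng e : edge_ok e -> vert_ok (edge_rng e).
Proof. by case: e => -[[n i] j] k /and3P[ic jc _]; rewrite /= jc ltn_pmod // tn_gt0. Qed.

Lemma vert_ok_src e : edge_ok e -> vert_ok (edge_src e).
Proof. by case: e => -[[n i] j] k /and3P[ic jc _]; rewrite /= ic ltn_pmod // tn_gt0. Qed.

Lemma cshift_mod_dvd d N k : d %| N -> cshift N k %% d = cshift d (k %% d).
Proof.
by move=> dN; rewrite /cshift modn_dvdm // -[k.+1]addn1 -[(k %% d).+1]addn1 modnDml.
Qed.

Lemma edge_rng_shift e : edge_ok e -> edge_rng (shift_edge e) = shift_vert (edge_rng e).
Proof. by case: e => -[[n i] j] k _; rewrite /= cshift_mod_dvd // dvdn_mull. Qed.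

Lemma edge_src_shift e : edge_ok e -> edge_src (shift_edge e) = shift_vert (edge_src e).
Proof.
case: e => -[[n i] j] k /and3P[ic jc _].
by rewrite /= cshift_mod_dvd // nedgesE // dvdn_mulr.
Qed.

Definition Vert := {v : nat * nat * nat | vert_ok v}.
Definition Edge := {e : nat * nat * nat * nat | edge_ok e}.

Definition vshift (v : Vert) : Vert := Sub _ (vert_ok_shift (valP v)).
Definition eshift (e : Edge) : Edge := Sub _ (edge_ok_shift (valP e)).
Definition erng (e : Edge) : Vert := Sub _ (vert_ok_rng (valP e)).
Definition esrc (e : Edge) : Vert := Sub _ (vert_ok_src (valP e)).

Definition level (v : Vert) : nat := (val v).1.1.
Definition lab (v : Vert) : nat := (val v).1.2.

Lemma erng_shift e : erng (eshift e) = vshift (erng e).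
Proof. by apply: val_inj; rewrite /= edge_rng_shift ?(valP e). Qed.

Lemma esrc_shift e : esrc (eshift e) = vshift (esrc e).
Proof. by apply: val_inj; rewrite /= edge_src_shift ?(valP e). Qed.

Lemma val_iter_vshift n j x (vP : vert_ok (n, j, x)) k :
  val (iter k vshift (Sub _ vP)) = (n, j, iter k (cshift (tn n j)) x).
Proof. by elim: k => //= k ->. Qed.

Lemma val_iter_eshift n i j k (eP : edge_ok (n, i, j, k)) q :
  val (iter q eshift (Sub _ eP)) = (n, i, j, iter q (cshift (nedges n i j)) k).
Proof. by elim: q => //= q ->. Qed.

Lemma vshift_period n j x (vP : vert_ok (n, j, x)) :
  exact_period vshift (Sub _ vP) (tn n j).
Proof.
have [t_gt0 per] := cshift_period (proj2 (andP vP)).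
by split=> // k; rewrite -val_eqE val_iter_vshift /= !xpair_eqE !eqxx per.
Qed.

Lemma eshift_period n i j k (eP : edge_ok (n, i, j, k)) :
  exact_period eshift (Sub _ eP) (nedges n i j).
Proof.
have /and3P[_ _ kN] := eP; have [N_gt0 per] := cshift_period kN.
by split=> // q; rewrite -val_eqE val_iter_eshift /= !xpair_eqE !eqxx per.
Qed.

Lemma vshift_bij : bijective vshift.
Proof.
apply: (@exact_period_bij _ _ (fun v => tn (level v) (lab v))) => [[[[n j] x] vP] //|].
by case=> -[[n j] x] vP; apply: vshift_period.
Qed.

Lemma eshift_bij : bijective eshift.
Proof.
apply: (@exact_period_bij _ _ (fun e => let: (n, i, j, _) := val e in nedges n i j)).
  by case=> -[[[n i] j] k].
by case=> -[[[n i] j] k] eP; apply: eshift_period.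
Qed.

Local Notation Lambda := (skew_graph erng esrc vshift eshift).

Lemma level_iter_vshift k v : level (iter k vshift v) = level v.
Proof. by case: v => -[[n j] x] vP; rewrite /level val_iter_vshift. Qed.

Lemma lab_iter_vshift k v : lab (iter k vshift v) = lab v.
Proof. by case: v => -[[n j] x] vP; rewrite /lab val_iter_vshift. Qed.

Lemma base_ok n j : j < c n -> vert_ok (n, j, 0).
Proof. by move=> jc; rewrite /= jc tn_gt0. Qed.

Lemma orbit_base n j (jc : j < c n) u :
  (exists k, iter k vshift u = Sub _ (base_ok jc)) <-> Vnj level lab n j u.
Proof.
split=> [[k uE] | ].
  by rewrite /Vnj -(level_iter_vshift k) -(lab_iter_vshift k) uE.
case: u => -[[n' j'] x] uP; rewrite /Vnj /level /lab /= => -[n_eq j_eq]; subst n' j'.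
have /andP[_ xt] := uP; exists (tn n j - x); apply: val_inj.
by rewrite val_iter_vshift iter_cshift // subnKC ?modnn // ltnW.
Qed.

Lemma card_level_lab n j : j < c n -> card_is (Vnj level lab n j) (tn n j).
Proof.
move=> jc; have vP (x : 'I_(tn n j)) : vert_ok (n, j, val x) by rewrite /= jc ltn_ord.
apply: (@card_is_ord_inj _ _ _ (fun x => Sub _ (vP x))).
  by move=> x x' /(congr1 val) [] /val_inj.
case=> -[[n' j'] x] uP; rewrite /Vnj /level /lab /=.
split=> [[n_eq j_eq] | [m /(congr1 val) [-> -> _]]] //.
subst n' j'; have /andP[_ xt] := uP.
by exists (Ordinal xt); apply: val_inj.
Qed.

Lemma card_edges_mod n i j d a x (P : Edge -> Prop) :
  i < c n.+1 -> j < c n -> x < d -> nedges n i j = a * d ->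
  (forall e, P e <-> exists2 k, val e = (n, i, j, k) & k %% d = x) -> card_is P a.
Proof.
move=> ic jc xd Nad PE; have d_gt0 : 0 < d by apply: leq_ltn_trans xd.
have eP (m : 'I_a) : edge_ok (n, i, j, x + m * d) by rewrite /= ic jc Nad ltn_add_mul.
apply: (@card_is_ord_inj _ _ _ (fun m => Sub _ (eP m))).
  move=> m m' /(congr1 val) [] /addnI /eqP; rewrite eqn_mul2r eqn0Ngt d_gt0 /=.
  by move=> /eqP /val_inj.
move=> e; split=> [/PE[k eE kx] | [m ->]].
  have := valP e; rewrite eE => /and3P[_ _]; rewrite Nad => ka.
  have [m ma kE] := (@modn_fibreP d a x k xd).1 (conj ka kx).
  by exists (Ordinal ma); apply: val_inj; rewrite /= eE kE.
by apply/PE; exists (x + m * d); rewrite // addnC modnMDl modn_small.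
Qed.

Lemma card_edges_into n i j v : i < c n.+1 -> Vnj level lab n j v ->
  card_is (fun e => erng e = v /\ Vnj level lab n.+1 i (esrc e)) (an n i j).
Proof.
case: v => -[[n' j'] x] vP ic; rewrite /Vnj /level /lab /= => -[n_eq j_eq].
subst n' j'; have /andP[jc xt] := vP.
apply: card_edges_mod ic jc xt _ _ => // -[[[[n0 i0] j0] k] eP] /=.
split=> [[/(congr1 val) [n_eq j_eq kx] [_ i_eq]] | [k' [n0_eq i0_eq j0_eq k_eq] kx]].
  by subst n0 j0 i0; exists k.
by subst n0 i0 j0 k'; split; first by apply: val_inj; rewrite /= kx.
Qed.

Lemma card_edges_from n i j w : j < c n -> Vnj level lab n.+1 i w ->
  card_is (fun e => esrc e = w /\ Vnj level lab n j (erng e)) (bn n i j).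
Proof.
case: w => -[[n' i'] y] wP jc; rewrite /Vnj /level /lab /= => -[n_eq i_eq].
subst n' i'; have /andP[ic yt] := wP.
have N_bt : nedges n i j = bn n i j * tn n.+1 i by rewrite nedgesE // mulnC.
apply: card_edges_mod ic jc yt N_bt _.
case=> -[[[n0 i0] j0] k] eP /=.
split=> [[/(congr1 val) [n_eq i_eq ky] [n0_eq j_eq]] | [k' [n0_eq i0_eq j0_eq k_eq] ky]].
  by subst n0 j0 i0; exists k.
by subst n0 i0 j0 k'; split; first by apply: val_inj; rewrite /= ky.
Qed.

Definition edges_into (v : Vert) : seq Edge :=
  let: (n, j, _) := val v in
  pmap insub [seq (n, i, j, k) | i <- iota 0 (c n.+1), k <- iota 0 (nedges n i j)].

Lemma edges_intoP e : e \in edges_into (erng e).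
Proof.
case: e => -[[[n i] j] k] eP; rewrite /edges_into /= mem_pmap_sub /=.
by have /and3P[ic _ kN] := eP; apply/allpairsPdep; exists i, k; rewrite !mem_iota.
Qed.

Definition verts_at n : seq Vert :=
  pmap insub [seq (n, j, x) | j <- iota 0 (c n), x <- iota 0 (tn n j)].

Lemma verts_atP v : v \in verts_at (level v).
Proof.
case: v => -[[n j] x] vP; rewrite /verts_at mem_pmap_sub /=.
by have /andP[jc xt] := vP; apply/allpairsPdep; exists j, x; rewrite !mem_iota.
Qed.

Lemma exists_edge_to v : exists e, erng e = v.
Proof.
case: v => -[[n j] x] vP; have /andP[jc xt] := vP.
have [i ic a_gt0] := exists_an_gt0 jc.
have eP : edge_ok (n, i, j, x) by rewrite /= ic jc (leq_trans xt) // leq_pmull.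
by exists (Sub _ eP); apply: val_inj; rewrite /= modn_small.
Qed.

Lemma exists_edge_from v : 0 < level v -> exists e, esrc e = v.
Proof.
case: v => -[[[|n] i] y] vP //= _; have /andP[ic yt] := vP.
have [j jc b_gt0] := exists_bn_gt0 ic.
have eP : edge_ok (n, i, j, y) by rewrite /= ic jc nedgesE // (leq_trans yt) // leq_pmulr.
by exists (Sub _ eP); apply: val_inj; rewrite /= modn_small.
Qed.

Lemma Lambda_rank2_bratteli : is_rank2_bratteli Lambda level.
Proof.
split; first exact: skew_two_graph vshift_bij eshift_bij erng_shift esrc_shift.
split; first exact: (skew_row_finite _ _ vshift_bij edges_intoP).
split; first by move=> n; exists (Sub _ (base_ok (c_gt0 n))).
split; first by move=> n; exists (verts_at n) => v <-; apply: verts_atP.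
split; first by move=> l /blue_edgeP[-[[[[n i] j] k] eP] ->].
split.
  move=> v no_edge; apply/eqP; rewrite -leqn0 leqNgt; apply/negP.
  by case/exists_edge_from => e eE; apply: (no_edge (blue_edge _ _ _ e)).
split; first by move=> v; have [e eE] := exists_edge_to v; exists (blue_edge _ _ _ e).
split.
  case=> -[[n j] x] vP; exists (red_path erng esrc vshift (tn n j) (Sub _ vP)).
  have per := vshift_period vP.
  split; first exact: red_loop_isolated_cycle vshift_bij erng_shift esrc_shift _ _ per.
  by apply: (red_loop_lies_on vshift_bij erng_shift esrc_shift _ per).2; exists 0.
by move=> f /red_pathP ->; apply: (level_iter_vshift 1).
Qed.

Lemma Lambda_associated_data : has_associated_data Lambda level lab A B T.
Proof.
split.
  split=> [[[[n j] x] /andP[]] // | n j jc].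
  exists (red_path erng esrc vshift (tn n j) (Sub _ (base_ok jc))).
  have per := vshift_period (base_ok jc).
  split; first exact: red_loop_isolated_cycle vshift_bij erng_shift esrc_shift _ _ per.
  move=> u; apply: iff_trans (orbit_base jc u).
  exact: (red_loop_lies_on vshift_bij erng_shift esrc_shift u per).
split.
  move=> n i j v vnj; exists (an n i j); split; last exact: A_nat.
  by apply: card_is_blue_edges; apply: card_edges_into (ltn_ord i) vnj.
split.
  move=> n i j w wnj; exists (bn n i j); split; last exact: B_nat.
  by apply: card_is_blue_edges; apply: card_edges_from (ltn_ord j) wnj.
split; first by move=> n i j ij; case: (T_proper_diag n) => _ ->.
by move=> n j; exists (tn n j); split; [apply: card_level_lab | apply: T_nat].
Qed.

Lemma Lambda_blue_edge_orbit n i j l :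
  dg Lambda l = e1 -> Vnj level lab n j (rg Lambda l) -> Vnj level lab n.+1 i (sc Lambda l) ->
  orbit_order Lambda l (an n i j * tn n j).
Proof.
move=> /blue_edgeP[-[[[[n0 i0] j0] k] eP] ->].
rewrite /Vnj /level /lab /= => -[n_eq j_eq] [_ i_eq]; subst n0 i0 j0.
exact: orbit_order_blue_edge vshift_bij erng_shift esrc_shift _ _ (eshift_period eP).
Qed.

End Construction.

Theorem proposition6p4 (c : nat -> nat)
  (A B : forall n, 'M[int]_(c n.+1, c n)) (T : forall n, 'M[int]_(c n)) :
  (forall n, 0 < c n)%N ->
  (forall n, proper_mx (A n)) ->
  (forall n, proper_mx (B n)) ->
  (forall n, proper_mx (T n) /\ diagonal_mx (T n)) ->
  (forall n, (A n *m T n = T n.+1 *m B n)%R) ->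
  exists (Obj Mor : countType) (L : kgraph_data Obj Mor) (level lab : Obj -> nat),
    is_rank2_bratteli L level /\
    has_associated_data L level lab A B T /\
    (forall n (i : 'I_(c n.+1)) (j : 'I_(c n)) (e : Mor),
       dg L e = e1 -> Vnj level lab n j (rg L e) -> Vnj level lab n.+1 i (sc L e) ->
       exists a k, A n i j = Posz a /\ card_is (Vnj level lab n j) k /\
                   orbit_order L e (a * k)).
Proof.
move=> c_gt0 A_proper B_proper T_proper_diag AT_TB.
do 5!eexists; split.
  exact: (Lambda_rank2_bratteli c_gt0 A_proper B_proper T_proper_diag AT_TB).
split; first exact: (Lambda_associated_data c_gt0 A_proper B_proper T_proper_diag AT_TB).
move=> n i j e d_e v_r v_s; exists (an A c_gt0 n i j), (tn T c_gt0 n j).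
split; first exact: A_nat.
split; first exact: card_level_lab.
exact: (Lambda_blue_edge_orbit A_proper B_proper AT_TB d_e v_r v_s).
Qed.
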